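(* Let $k,r\geq 1$, let $1\le d\le r$, and let $I_d\subseteq\{1,\dots,r\}$ with $|I_d|=d$. Then for every $n\geq k$, $$\Bigl|S_n^{(r)}\Bigl(\bigcup_{m=1}^{k}T_{k,r}^m(I_d)\Bigr)\Bigr|=r^{k-1}(r-d)^{n+1-k}\,n!.$$
   Context: For $n,r\ge1$, $S_n^{(r)}$ denotes the set of coloured permutations of length $n$ with $r$ colours: sequences $\phi=(\phi_1,\dots,\phi_n)$ where $\phi_i=a_i^{(c_i)}$, $(a_1,\dots,a_n)$ is a permutation of $\{1,\dots,n\}$ and each $c_i\in\{1,\dots,r\}$ is the colour of $a_i$. For $\phi=(\tau_1^{(s_1)},\dots,\tau_k^{(s_k)})\in S_k^{(r)}$ and $\psi=(\alpha_1^{(v_1)},\dots,\alpha_n^{(v_n)})\in S_n^{(r)}$, an occurrence of $\phi$ in $\psi$ is a sequence of indices $1\le i_1<\dots<i_k\le n$ such that $(\alpha_{i_1},\dots,\alpha_{i_k})$ is order-isomorphic to $(\tau_1,\dots,\tau_k)$ and $v_{i_j}=s_j$ for all $j$. $\psi$ contains $\phi$ if there is at least one occurrence, and avoids $\phi$ otherwise. For a set $T$ of coloured patterns, $S_n^{(r)}(T)$ is the set of $\psi\in S_n^{(r)}$ avoiding every $\phi\in T$. For $I_d\subseteq\{1,\dots,r\}$ with $|I_d|=d$ and $1\le m\le k$, $T_{k,r}^m(I_d)$ is the set of all $\phi\in S_k^{(r)}$ whose first entry is $\phi_1=m^{(c)}$ for some colour $c\in I_d$. *)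

From mathcomp Require Import all_boot perm.
Set Implicit Arguments. Unset Strict Implicit. Unset Printing Implicit Defensive.

(* Coloured permutations of length n with r colours.
   Position i : 'I_n (0-based), value (p.1 i) : 'I_n (value a_i = val + 1),
   colour (p.2 i) : 'I_r (colour c_i = val + 1). *)
Definition cperm (n r : nat) : finType :=
  ({perm 'I_n} * {ffun 'I_n -> 'I_r})%type.

Definition occurrence (k n r : nat) (phi : cperm k r) (psi : cperm n r)
    (f : {ffun 'I_k -> 'I_n}) : bool :=
  [forall j1 : 'I_k, forall j2 : 'I_k, (j1 < j2) ==> (f j1 < f j2)] &&
  [forall j1 : 'I_k, forall j2 : 'I_k,
      (phi.1 j1 < phi.1 j2) == (psi.1 (f j1) < psi.1 (f j2))] &&
  [forall j : 'I_k, psi.2 (f j) == phi.2 j].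

Definition contains (k n r : nat) (psi : cperm n r) (phi : cperm k r) : bool :=
  [exists f : {ffun 'I_k -> 'I_n}, occurrence phi psi f].

Definition avoids (k n r : nat) (psi : cperm n r) (phi : cperm k r) : bool :=
  ~~ contains psi phi.

Definition avoiders (n k r : nat) (T : {set cperm k r}) : {set cperm n r} :=
  [set psi : cperm n r | [forall phi in T, avoids psi phi]].

(* T_{k,r}^m(I): patterns whose first entry is m^{(c)} with c in I.
   m is 1-based, colours in I are 0-based ('I_r codes colour c as c-1). *)
Definition Tkrm (k r m : nat) (I : {set 'I_r}) : {set cperm k r} :=
  [set phi : cperm k r | [exists j : 'I_k,
      (val j == 0) && (val (phi.1 j) == m.-1) && (phi.2 j \in I)]].

Arguments Tkrm k r m I : clear implicits.
Arguments avoiders n k r T : clear implicits.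

From mathcomp Require Import all_boot perm.

Set Implicit Arguments.
Unset Strict Implicit.
Unset Printing Implicit Defensive.

(** A coloured permutation [psi] of length [n] avoids every pattern of length
  [k + 1] whose first entry has a colour in [I] exactly when none of its first
  [n - k] entries has a colour in [I]: an occurrence starting at position [i]
  needs [k] further positions after [i], and conversely the [k + 1] consecutive
  entries starting at such a position, standardized, form a forbidden pattern.
  Avoidance therefore constrains only the colours, and counting gives
  [n! (r - d)^(n - k) r^k]. *)

Lemma prod_ord_if_lt (N p a b : nat) : p <= N ->
  \prod_(i < N) (if i < p then a else b) = a ^ p * b ^ (N - p).
Proof.
move=> le_pN; rewrite -(big_mkord xpredT (fun i => if i < p then a else b)).
rewrite (big_cat_nat (leq0n p) le_pN) /=.
rewrite (@eq_big_nat _ _ _ 0 p _ (fun=> a)); last by move=> i /andP[_ ->].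
rewrite (@eq_big_nat _ _ _ p N _ (fun=> b)); last first.
  by move=> i /andP[le_pi _]; rewrite ltnNge le_pi.
by rewrite !prod_nat_const_nat subn0.
Qed.

Lemma card_colourings_avoiding (n r p : nat) (I : {set 'I_r}) : p <= n ->
  #|[set c : {ffun 'I_n -> 'I_r} |
      [forall i : 'I_n, (i < p) ==> (c i \notin I)]]| =
    (r - #|I|) ^ p * r ^ (n - p).
Proof.
move=> le_pn.
pose F (i : 'I_n) := if i < p then [pred x | x \notin I] else predT.
have -> : #|[set c : {ffun 'I_n -> 'I_r} |
            [forall i : 'I_n, (i < p) ==> (c i \notin I)]]| = #|family F|.
  apply: eq_card => c; rewrite inE; apply/forallP/familyP => c_ok i;
    by have := c_ok i; rewrite /F; case: ifP => //= _ /implyP; apply.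
have card_F i : #|F i| = if i < p then r - #|I| else r.
  rewrite /F; case: ifP => _; last by rewrite -[RHS]card_ord; apply: eq_card.
  by rewrite -[X in _ = X - _]card_ord -(cardC I) addKn.
rewrite card_family foldrE big_image /= (eq_bigr _ (fun i _ => card_F i)).
exact: prod_ord_if_lt.
Qed.

Section Standardization.
Variables (k : nat) (g : 'I_k -> nat).

Definition std_rank (j : 'I_k) : nat := #|[set j' | g j' < g j]|.

Lemma std_rank_lt j : std_rank j < k.
Proof.
rewrite -[ltnRHS]card_ord -cardsT; apply: proper_card; rewrite properT.
by apply/eqP => /setP/(_ j); rewrite !inE ltnn.
Qed.

Lemma std_rank_homo j1 j2 : g j1 < g j2 -> std_rank j1 < std_rank j2.
Proof.
move=> lt_g; apply: proper_card; apply/properP; split.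
  by apply/subsetP => x; rewrite !inE => /ltn_trans; apply.
by exists j1; rewrite !inE ?lt_g // ltnn.
Qed.

Hypothesis g_inj : injective g.

Lemma std_rank_ltE j1 j2 : (std_rank j1 < std_rank j2) = (g j1 < g j2).
Proof.
case: (ltngtP (g j1) (g j2)) => [/std_rank_homo -> //|/std_rank_homo|/g_inj ->].
  by move/ltnW; rewrite leqNgt => /negbTE.
by rewrite ltnn.
Qed.

Lemma standardization :
  exists s : {perm 'I_k}, forall j1 j2, (s j1 < s j2) = (g j1 < g j2).
Proof.
pose s j := Ordinal (std_rank_lt j).
have s_inj : injective s.
  move=> j1 j2 /(congr1 val) /= eq_rk; apply: g_inj.
  by case: (ltngtP (g j1) (g j2)) => // /std_rank_homo; rewrite eq_rk ltnn.
by exists (perm s_inj) => j1 j2; rewrite !permE std_rank_ltE.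
Qed.

End Standardization.

Lemma increasing_ord_gap (k n : nat) (f : 'I_k.+1 -> 'I_n) :
  (forall j1 j2 : 'I_k.+1, j1 < j2 -> f j1 < f j2) ->
  forall j : 'I_k.+1, f ord0 + j <= f j.
Proof.
move=> f_incr [j lt_jk]; elim: j lt_jk => [|j IHj] lt_jk.
  by rewrite addn0; have -> : ord0 = Ordinal lt_jk by apply: val_inj.
rewrite addnS; apply: leq_ltn_trans (IHj (ltnW lt_jk)) _.
exact: f_incr.
Qed.

Lemma occurrence_start_lt (k n r : nat) (phi : cperm k.+1 r) (psi : cperm n r)
    (f : {ffun 'I_k.+1 -> 'I_n}) :
  occurrence phi psi f -> f ord0 + k < n.
Proof.
case/andP=> /andP[/'forall_forallP f_incr _] _.
apply: leq_ltn_trans (ltn_ord (f ord_max)).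
by apply: increasing_ord_gap => j1 j2; apply/implyP/f_incr.
Qed.

Lemma contains_window (k n r : nat) (psi : cperm n r) (i : 'I_n) :
  i + k < n ->
  exists2 phi : cperm k.+1 r, phi.2 ord0 = psi.2 i & contains psi phi.
Proof.
move=> lt_ikn.
pose f : {ffun 'I_k.+1 -> 'I_n} := [ffun j : 'I_k.+1 => insubd i (i + j)].
have fE (j : 'I_k.+1) : nat_of_ord (f j) = i + j.
  rewrite ffunE insubdK //; apply: leq_ltn_trans lt_ikn.
  by rewrite leq_add2l -ltnS.
have /standardization [s s_lt] : injective (fun j => nat_of_ord (psi.1 (f j))).
  move=> j1 j2 /val_inj /perm_inj /(congr1 (@nat_of_ord _)).
  by rewrite !fE => /addnI /val_inj.
exists (s, [ffun j => psi.2 (f j)]).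
  by rewrite ffunE; congr (psi.2 _); apply: val_inj; rewrite /= fE addn0.
apply/existsP; exists f; apply/andP; split; [apply/andP; split|].
- by apply/'forall_forallP => j1 j2; apply/implyP; rewrite !fE ltn_add2l.
- by apply/'forall_forallP => j1 j2; rewrite s_lt.
- by apply/forallP => j; rewrite !ffunE.
Qed.

Section Avoidance.
Variables (k n r : nat) (I : {set 'I_r}).

Local Notation T := (\bigcup_(1 <= m < k.+2) Tkrm k.+1 r m I).

Lemma mem_bigcup_Tkrm (phi : cperm k.+1 r) : (phi \in T) = (phi.2 ord0 \in I).
Proof.
rewrite (big_morph (fun A : {set cperm k.+1 r} => phi \in A)
          (in_setU phi) (in_set0 phi)) big_has.
apply/hasP/idP => [[m _]|phi0_I].
  rewrite inE => /existsP[j /andP[/andP[/eqP j0 _]]].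
  by have -> : ord0 = j by apply: val_inj.
exists (phi.1 ord0).+1; first by rewrite mem_index_iota /= ltnS ltn_ord.
by rewrite inE; apply/existsP; exists ord0; rewrite /= eqxx phi0_I.
Qed.

Lemma avoiders_bigcup_TkrmP (psi : cperm n r) :
  (psi \in avoiders n k.+1 r T) =
    [forall i : 'I_n, (i < n - k) ==> (psi.2 i \notin I)].
Proof.
rewrite inE; apply/forallP/forallP => [avoid i|colours phi].
  apply/implyP; rewrite ltn_subRL addnC => /(@contains_window k n r psi i).
  case=> phi phi0 psi_phi; apply/negP => psi_i.
  have /implyP := avoid phi; rewrite mem_bigcup_Tkrm phi0 => /(_ psi_i).
  by rewrite /avoids psi_phi.
apply/implyP; rewrite mem_bigcup_Tkrm => phi0_I; apply/existsP => -[f occ_f].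
have /implyP := colours (f ord0); rewrite ltn_subRL addnC.
move=> /(_ (occurrence_start_lt occ_f)); apply/negP.
by case/andP: occ_f => _ /forallP/(_ ord0)/eqP ->; rewrite phi0_I.
Qed.

End Avoidance.

Theorem mainTheorem3 (k r d : nat) (I : {set 'I_r}) (n : nat) :
  1 <= k -> 1 <= r -> 1 <= d <= r -> #|I| = d -> k <= n ->
  #|avoiders n k r (\bigcup_(1 <= m < k.+1) Tkrm k r m I)| =
    r ^ (k - 1) * (r - d) ^ (n + 1 - k) * n`!.
Proof.
case: k => [//|k] _ _ _ <- le_kn.
have -> : avoiders n k.+1 r (\bigcup_(1 <= m < k.+2) Tkrm k.+1 r m I) =
    setX [set: {perm 'I_n}]
      [set c : {ffun 'I_n -> 'I_r} |
        [forall i : 'I_n, (i < n - k) ==> (c i \notin I)]].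
  by apply/setP => -[s c]; rewrite avoiders_bigcup_TkrmP !inE.
rewrite cardsX cardsT card_Sn card_colourings_avoiding ?leq_subr //.
rewrite subKn ?(ltnW le_kn) // subn1 addn1 subSS /=.
by rewrite mulnC (mulnC (_ ^ (n - k))).
Qed.
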